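(* Let $\Lambda=\{\Lambda_\omega\in B(\mathcal H,\mathcal K_\omega):\omega\in\Omega\}$ and $\Theta=\{\Theta_\omega\in B(\mathcal H,\mathcal K_\omega):\omega\in\Omega\}$ be two strongly disjoint continuous $g$-frames for $\mathcal H$ and let $L_1,L_2\in B(\mathcal H)$ with $L_1$ surjective. Let $L_1^\dagger\in B(\mathcal H)$ be a pseudo-inverse of $L_1$, i.e. a bounded operator with $L_1L_1^\dagger=I$. Then $\{\Lambda_\omega S_\Lambda^{-1}L_1^\dagger:\omega\in\Omega\}$ is a dual for both $\{\Lambda_\omega L_1^*:\omega\in\Omega\}$ and $\{\Lambda_\omega L_1^*+\Theta_\omega L_2^*:\omega\in\Omega\}$.
   Context: $\mathcal H$ is a complex Hilbert space, $(\Omega,\mu)$ a measure space with positive measure $\mu$, and $\{\mathcal K_\omega:\omega\in\Omega\}$ a family of complex Hilbert spaces. A map $F$ on $\Omega$ with $F(\omega)\in\mathcal K_\omega$ is strongly measurable if it is measurable as a map $\Omega\to\bigoplus_\omega\mathcal K_\omega$; $\widehat{\mathcal K}$ is the Hilbert space of strongly measurable such $F$ with $\int_\Omega\|F(\omega)\|^2d\mu<\infty$, inner product $\langle F,G\rangle=\int_\Omega\langle F(\omega),G(\omega)\rangle d\mu$. A family $\Lambda=\{\Lambda_\omega\in B(\mathcal H,\mathcal K_\omega)\}$ is a continuous $g$-frame for $\mathcal H$ if $\omega\mapsto\Lambda_\omega f$ is strongly measurable for each $f$ and there are $0<A\le B<\infty$ with $A\|f\|^2\le\int_\Omega\|\Lambda_\omega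 f\|^2d\mu(\omega)\le B\|f\|^2$ for all $f\in\mathcal H$. Its analysis operator $T_\Lambda^*:\mathcal H\to\widehat{\mathcal K}$ is $(T_\Lambda^*f)(\omega)=\Lambda_\omega f$, and its frame operator $S_\Lambda$ is the positive invertible operator with $\langle S_\Lambda f,g\rangle=\int_\Omega\langle f,\Lambda_\omega^*\Lambda_\omega g\rangle d\mu(\omega)$. Two continuous $g$-frames $\Lambda,\Theta$ are strongly disjoint if $\mathrm{Range}\,T_\Lambda^*\perp\mathrm{Range}\,T_\Theta^*$. A continuous $g$-frame $\Theta$ is a dual of a continuous $g$-frame $\Lambda$ if $\langle f,g\rangle=\int_\Omega\langle f,\Theta_\omega^*\Lambda_\omega g\rangle d\mu(\omega)$ for all $f,g\in\mathcal H$. *)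

From HB Require Import structures.
From mathcomp Require Import all_boot all_order all_algebra.
From mathcomp Require Import all_classical all_reals all_analysis.
From mathcomp Require Import complex.

Set Implicit Arguments.
Unset Strict Implicit.
Unset Printing Implicit Defensive.

Import Order.TTheory GRing.Theory Num.Theory.
Local Open Scope classical_set_scope.
Local Open Scope ring_scope.

Section ContGFrames.
Variable R : realType.
Local Notation C := (R[i]).

Definition ip_norm (V : lmodType C) (ip : V -> V -> C) (x : V) : R :=
  Num.sqrt (complex.Re (ip x x)).

Definition is_hilbert (V : lmodType C) (ip : V -> V -> C) : Prop :=
  [/\ (forall (a : C) (x y z : V), ip (a *: x + y) z = a * ip x z + ip y z),
      (forall x y : V, ip y x = complex.conjc (ip x y)),
      (forall x : V, complex.Im (ip x x) = 0 /\ 0 <= complex.Re (ip x x)),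
      (forall x : V, ip x x = 0 -> x = 0) &
      (forall u : nat -> V,
         (forall e : R, 0 < e -> exists N : nat, forall m n : nat,
              (N <= m)%N -> (N <= n)%N -> ip_norm ip (u m - u n) < e) ->
         exists x : V, forall e : R, 0 < e -> exists N : nat, forall n : nat,
              (N <= n)%N -> ip_norm ip (u n - x) < e)].

Definition bounded_op (V W : lmodType C) (ipV : V -> V -> C) (ipW : W -> W -> C)
  (T : V -> W) : Prop :=
  (forall (a : C) (x y : V), T (a *: x + y) = a *: T x + T y) /\
  exists M : R, forall x : V, ip_norm ipW (T x) <= M * ip_norm ipV x.

Definition is_adjoint (V W : lmodType C) (ipV : V -> V -> C) (ipW : W -> W -> C)
  (T : V -> W) (Ts : W -> V) : Prop :=
  forall (x : V) (y : W), ipW (T x) y = ipV x (Ts y).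

Variables (d : measure_display) (Omega : measurableType d).
Variable mu : {measure set Omega -> \bar R}.

Definition cintegrable (F : Omega -> C) : Prop :=
  mu.-integrable setT (fun w => (complex.Re (F w))%:E) /\
  mu.-integrable setT (fun w => (complex.Im (F w))%:E).

Definition cintegral (F : Omega -> C) : C :=
  Complex (Rintegral mu setT (fun w => complex.Re (F w)))
          (Rintegral mu setT (fun w => complex.Im (F w))).

Variable K : Omega -> lmodType C.
Variable ipK : forall w, K w -> K w -> C.

Definition dnorm2 (x : forall w, K w) : \bar R :=
  \esum_(w in [set: Omega]) ((ip_norm (@ipK w) (x w)) ^+ 2)%:E.

(* the carrier of the Hilbert direct sum *)
Definition dsum_set : set (forall w, K w) := [set x | dnorm2 x < +oo]%E.

Definition dsum_open (U : set (forall w, K w)) : Prop :=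
  U `<=` dsum_set /\
  forall x, U x -> exists r : R, 0 < r /\
    forall y, dsum_set y -> (dnorm2 (fun w => (y w - x w)%R) < (r ^+ 2)%:E)%E -> U y.

Definition dsum_borel : set (set (forall w, K w)) :=
  smallest (sigma_algebra dsum_set) dsum_open.

Definition dinj (w : Omega) (v : K w) : forall w', K w' :=
  fun w' => match pselect (w = w') with
            | left e => eq_rect w K v w' e
            | right _ => 0
            end.

(* F with F w in K_w is strongly measurable: measurable as a map
   Omega -> (+)_w K_w *)
Definition strongly_measurable (F : forall w, K w) : Prop :=
  forall B, dsum_borel B -> measurable [set w | B (dinj (F w))].

Variable H : lmodType C.
Variable ip : H -> H -> C.

Definition cgframe (L : forall w, H -> K w) : Prop :=
  [/\ (forall w, bounded_op ip (@ipK w) (L w)),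
      (forall f : H, strongly_measurable (fun w => L w f)) &
      exists A B : R, [/\ 0 < A, A <= B &
        forall f : H,
          ((A * ip_norm ip f ^+ 2)%:E
             <= \int[mu]_w ((ip_norm (@ipK w) (L w f)) ^+ 2)%:E)%E /\
          (\int[mu]_w ((ip_norm (@ipK w) (L w f)) ^+ 2)%:E
             <= (B * ip_norm ip f ^+ 2)%:E)%E]].

Definition khat_ip (F G : forall w, K w) : C :=
  cintegral (fun w => ipK (F w) (G w)).

(* strongly disjoint: Range T_L^* is orthogonal to Range T_T^* in \hat K *)
Definition strongly_disjoint (L T : forall w, H -> K w) : Prop :=
  forall f g : H, khat_ip (fun w => L w f) (fun w => T w g) = 0.

Definition frame_operator (L : forall w, H -> K w) (S : H -> H) : Prop :=
  bounded_op ip ip S /\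
  forall Ls : forall w, K w -> H, (forall w, is_adjoint ip (@ipK w) (L w) (Ls w)) ->
  forall f g : H, ip (S f) g = cintegral (fun w => ip f (Ls w (L w g))).

Definition cg_dual (T L : forall w, H -> K w) : Prop :=
  [/\ cgframe T, cgframe L &
      forall Ts : forall w, K w -> H, (forall w, is_adjoint ip (@ipK w) (T w) (Ts w)) ->
      forall f g : H, cintegrable (fun w => ip f (Ts w (L w g))) /\
                      ip f g = cintegral (fun w => ip f (Ts w (L w g)))].

End ContGFrames.

(* Both duality identities come from the reproducing formula
     <f, g> = <S S^-1 L1^+ f, L1^* g> = int <Lam_w S^-1 L1^+ f, Lam_w L1^* g> dmu,
   in which <S a, b> = int <Lam_w a, Lam_w b> dmu is the defining identity of the
   frame operator, made usable by the existence of the adjoints Lam_w^* (Riesz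
   representation); for the second family the extra term
   int <Lam_w S^-1 L1^+ f, Theta_w L2^* g> dmu vanishes by strong disjointness.
   What remains is to see that all the families are continuous g-frames:
   composing a frame with an operator that is bounded and bounded below keeps a
   frame (S^-1 L1^+ has the bounded left inverse L1 S, and L1^* is bounded below
   because L1^+ is a bounded right inverse of L1), and adding a strongly
   disjoint Bessel family to a frame keeps a frame, the energies being additive.
   S is coercive, so S^-1 is bounded. *)

From HB Require Import structures.
From mathcomp Require Import all_boot all_order all_algebra.
From mathcomp Require Import all_classical all_reals all_analysis.
From mathcomp Require Import complex measurable_realfun.
From mathcomp Require Import ring lra.
Import Order.TTheory GRing.Theory Num.Theory.
Local Open Scope classical_set_scope.
Local Open Scope ring_scope.

Set Implicit Arguments.
Unset Strict Implicit.
Unset Printing Implicit Defensive.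

(** * Complex inner products *)

Section ComplexArith.
Variable R : realType.
Implicit Types x y : R[i].

Lemma cReD x y : complex.Re (x + y) = complex.Re x + complex.Re y.
Proof. by case: x y => [a b] [c e]. Qed.
Lemma cImD x y : complex.Im (x + y) = complex.Im x + complex.Im y.
Proof. by case: x y => [a b] [c e]. Qed.
Lemma cReN x : complex.Re (- x) = - complex.Re x.
Proof. by case: x. Qed.
Lemma cImN x : complex.Im (- x) = - complex.Im x.
Proof. by case: x. Qed.
Lemma cReM x y :
  complex.Re (x * y) = complex.Re x * complex.Re y - complex.Im x * complex.Im y.
Proof. by case: x y => [a b] [c e]. Qed.
Lemma cImM x y :
  complex.Im (x * y) = complex.Re x * complex.Im y + complex.Im x * complex.Re y.
Proof. by case: x y => [a b] [c e]. Qed.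
Lemma cReJ x : complex.Re (complex.conjc x) = complex.Re x.
Proof. by case: x. Qed.
Lemma cImJ x : complex.Im (complex.conjc x) = - complex.Im x.
Proof. by case: x. Qed.
Lemma cReR (r : R) : complex.Re (r%:C%C : R[i]) = r.
Proof. by []. Qed.
Lemma cImR (r : R) : complex.Im (r%:C%C : R[i]) = 0.
Proof. by []. Qed.

Lemma cReI : complex.Re ('i%C : R[i]) = 0.
Proof. by []. Qed.
Lemma cImI : complex.Im ('i%C : R[i]) = 1.
Proof. by []. Qed.

Lemma complexP x y :
  complex.Re x = complex.Re y -> complex.Im x = complex.Im y -> x = y.
Proof. by case: x y => [a b] [c e] /= -> ->. Qed.

End ComplexArith.

Definition cE := (cReD, cImD, cReN, cImN, cReM, cImM, cReJ, cImJ, cReR, cImR, cReI, cImI).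

Section LinearMaps.
Variables (R : realType) (V W : lmodType R[i]) (T : V -> W).
Hypothesis linT : linear T.

Lemma lin0 : T 0 = 0.
Proof.
have := linT 1 0 0; rewrite !scale1r addr0 => h.
by apply: (@addrI _ (T 0)); rewrite addr0 -h.
Qed.
Lemma linD x y : T (x + y) = T x + T y.
Proof. by have := linT 1 x y; rewrite !scale1r. Qed.
Lemma linZ a x : T (a *: x) = a *: T x.
Proof. by rewrite -[a *: x]addr0 linT lin0 addr0. Qed.
Lemma linN x : T (- x) = - T x.
Proof. by rewrite -scaleN1r linZ scaleN1r. Qed.
Lemma linB x y : T (x - y) = T x - T y.
Proof. by rewrite linD linN. Qed.

End LinearMaps.

Lemma scalarZ (R : realType) (V : lmodType R[i]) (T : V -> R[i]) :
  linear T -> forall a x, T (a *: x) = a * T x.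
Proof. by move=> linT a x; rewrite (linZ linT). Qed.

Section InnerProduct.
Variables (R : realType) (V : lmodType R[i]) (ip : V -> V -> R[i]).
Hypothesis hV : is_hilbert ip.
Local Notation nrm := (ip_norm ip).

Definition sqnorm (x : V) : R := complex.Re (ip x x).
Local Notation sqn := sqnorm.

Lemma ip_linear z : linear (ip^~ z).
Proof. by case: hV => h * a x y; rewrite h. Qed.

Lemma ipC x y : ip y x = complex.conjc (ip x y).
Proof. by case: hV. Qed.

Lemma ip0l z : ip 0 z = 0.
Proof. exact: lin0 (ip_linear z). Qed.
Lemma ipDl x y z : ip (x + y) z = ip x z + ip y z.
Proof. by rewrite (linD (ip_linear z)). Qed.
Lemma ipZl a x z : ip (a *: x) z = a * ip x z.
Proof. by rewrite (scalarZ (ip_linear z)). Qed.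
Lemma ipBl x y z : ip (x - y) z = ip x z - ip y z.
Proof. by rewrite (linB (ip_linear z)). Qed.

Lemma ip0r z : ip z 0 = 0.
Proof. by rewrite ipC ip0l rmorph0. Qed.
Lemma ipDr x y z : ip z (x + y) = ip z x + ip z y.
Proof. by rewrite ipC ipDl rmorphD /= -!ipC. Qed.
Lemma ipZr a x z : ip z (a *: x) = complex.conjc a * ip z x.
Proof. by rewrite ipC ipZl rmorphM /= -ipC. Qed.
Lemma ipBr x y z : ip z (x - y) = ip z x - ip z y.
Proof. by rewrite ipC ipBl rmorphB /= -!ipC. Qed.

Lemma ipxx x : ip x x = (sqn x)%:C%C.
Proof. by case: hV => _ _ h _ _; apply: complexP => //=; case: (h x). Qed.

Lemma sqnorm_ge0 x : 0 <= sqn x.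
Proof. by case: hV => _ _ h _ _; case: (h x). Qed.

Lemma sqnorm_eq0 x : sqn x = 0 -> x = 0.
Proof. by case: hV => _ _ _ h _ e; apply: h; rewrite ipxx e. Qed.

Lemma sqnorm0 : sqn 0 = 0.
Proof. by rewrite /sqn ip0l. Qed.

Lemma ip_norm0 : nrm 0 = 0.
Proof. by rewrite /ip_norm -/(sqn 0) sqnorm0 sqrtr0. Qed.

Lemma ip_norm_ge0 x : 0 <= nrm x.
Proof. exact: sqrtr_ge0. Qed.

Lemma ip_norm_sqr x : nrm x ^+ 2 = sqn x.
Proof. by rewrite sqr_sqrtr // sqnorm_ge0. Qed.

Lemma sqnormD x y : sqn (x + y) = sqn x + sqn y + 2 * complex.Re (ip x y).
Proof. by rewrite /sqn ipDl !ipDr (ipC x y) !cE; lra. Qed.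

Lemma sqnormB x y : sqn (x - y) = sqn x + sqn y - 2 * complex.Re (ip x y).
Proof. by rewrite /sqn ipBl !ipBr (ipC x y) !cE; lra. Qed.

Lemma sqnormZ a x :
  sqn (a *: x) = (complex.Re a ^+ 2 + complex.Im a ^+ 2) * sqn x.
Proof. by rewrite /sqn ipZl ipZr ipxx !cE; lra. Qed.

Lemma parallelogram x y : sqn (x + y) + sqn (x - y) = 2 * (sqn x + sqn y).
Proof. by rewrite sqnormD sqnormB; lra. Qed.

Lemma ip_normZ a x :
  nrm (a *: x) = Num.sqrt (complex.Re a ^+ 2 + complex.Im a ^+ 2) * nrm x.
Proof. by rewrite /ip_norm -!/(sqn _) sqnormZ sqrtrM // addr_ge0 // sqr_ge0. Qed.

Lemma sqnormN x : sqn (- x) = sqn x.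
Proof. by rewrite -sub0r sqnormB sqnorm0 ip0l mulr0 add0r subr0. Qed.

Lemma ip_normN x : nrm (- x) = nrm x.
Proof. by rewrite /ip_norm -!/(sqn _) sqnormN. Qed.

Lemma Re_ip_le x y : complex.Re (ip x y) <= nrm x * nrm y.
Proof.
have [->|x0] := eqVneq x 0; first by rewrite ip0l mulr_ge0 ?ip_norm_ge0.
have [->|y0] := eqVneq y 0; first by rewrite ip0r mulr_ge0 ?ip_norm_ge0.
have sq_pos z : z != 0 -> 0 < nrm z.
  move=> z0; rewrite lt_neqAle ip_norm_ge0 andbT eq_sym; apply/eqP => h.
  by move/eqP: z0; apply; apply: sqnorm_eq0; rewrite -ip_norm_sqr h expr0n.
have ab0 := mulr_gt0 (sq_pos _ x0) (sq_pos _ y0).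
(* expand [0 <= | |y| x - |x| y |^2] *)
have := sqnorm_ge0 ((nrm y)%:C%C *: x - (nrm x)%:C%C *: y).
rewrite sqnormB !sqnormZ ipZl ipZr -!ip_norm_sqr !cE /= expr0n /= !addr0 => h.
by rewrite -(ler_pM2l ab0); nra.
Qed.

Lemma normRe_ip_le x y : `|complex.Re (ip x y)| <= nrm x * nrm y.
Proof.
rewrite ler_norml Re_ip_le andbT lerNl -cReN -(linN (ip_linear y)).
by rewrite -(ip_normN x) Re_ip_le.
Qed.

Lemma normIm_ip_le x y : `|complex.Im (ip x y)| <= nrm x * nrm y.
Proof.
have -> : complex.Im (ip x y) = complex.Re (ip x ('i%C *: y)).
  by rewrite ipZr !cE mul0r add0r mulN1r opprK.
apply: le_trans (normRe_ip_le _ _) _.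
by rewrite ip_normZ !cE expr0n expr1n add0r sqrtr1 mul1r.
Qed.

Lemma ip_normD x y : nrm (x + y) <= nrm x + nrm y.
Proof.
rewrite -(@ler_pXn2r _ 2) // ?nnegrE ?addr_ge0 ?ip_norm_ge0 //.
by rewrite ip_norm_sqr sqnormD sqrrD !ip_norm_sqr; have := Re_ip_le x y; lra.
Qed.

Lemma ip_norm_mul_le x y : nrm x * nrm y <= (sqn x + sqn y) / 2.
Proof. by rewrite -!ip_norm_sqr; have := sqr_ge0 (nrm x - nrm y); rewrite sqrrB; lra. Qed.

Lemma ip_inj_r u v : (forall x, ip x u = ip x v) -> u = v.
Proof.
move=> h; apply/eqP; rewrite -subr_eq0; apply/eqP; apply: sqnorm_eq0.
by rewrite /sqn ipBr h subrr.
Qed.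

Lemma sqnorm_le_of_approx z (b : R) :
  (forall e, 0 < e -> exists x, sqn x <= b + e /\ nrm (x - z) < e) -> sqn z <= b.
Proof.
move=> approx; apply/ler_addgt0Pr => e' e'0.
(* for [e <= 1]: [|z|^2 <= (|x| + e)^2 <= b + e * K], using [|x| <= |b| + 2] *)
set K := 2 * `|b| + 6.
have K0 : 0 < K by rewrite /K; have := normr_ge0 b; lra.
set e := Num.min 1 (e' / K).
have e0 : 0 < e by rewrite lt_min ltr01 divr_gt0.
have e1 : e <= 1 by rewrite ge_min lexx.
have eK : e * K <= e' by rewrite -ler_pdivlMr // ge_min lexx orbT.
have [x [hx hxz]] := approx e e0.
have hz : nrm z <= nrm x + e.
  have -> : z = x - (x - z) by rewrite opprB addrC subrK.
  by apply: le_trans (ip_normD _ _) _; rewrite ip_normN lerD // ltW.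
have hxb : nrm x <= `|b| + 2.
  have := ip_norm_sqr x; have := ip_norm_ge0 x; have := ler_norm b; nra.
rewrite -!ip_norm_sqr in hx *.
have := ip_norm_ge0 z; have := ip_norm_ge0 x; rewrite /K in eK; nra.
Qed.

Lemma ip_eq0_of_min (z v : V) :
  (forall a : R[i], sqn z <= sqn (z + a *: v)) -> ip v z = 0.
Proof.
move=> zmin; set s := (sqn v + 1)^-1.
have v0 := sqnorm_ge0 v.
have s0 : 0 < s by rewrite invr_gt0; lra.
have sv : s * sqn v <= 1 by rewrite /s mulrC ler_pdivrMr; lra.
suff wz0 : ip z v = 0 by rewrite ipC wz0 conjc0.
(* a small step from [z] along [- <z, v> v] would decrease [|z|] *)
have := zmin (- (s%:C%C * ip z v)).
rewrite sqnormD sqnormZ ipZr !cE.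
case: (ip z v) => p q /= h.
have pq0 : 0 <= p ^+ 2 + q ^+ 2 by rewrite addr_ge0 ?sqr_ge0.
have : s * (p ^+ 2 + q ^+ 2) <= 0.
  have : s * (p ^+ 2 + q ^+ 2) * (s * sqn v) <= s * (p ^+ 2 + q ^+ 2).
    by rewrite ler_piMr ?mulr_ge0 // ltW.
  by move: h; rewrite !sqrrN; nra.
rewrite pmulr_rle0 // => hpq; apply: complexP => /=; nra.
Qed.

End InnerProduct.

(** * Riesz representation *)

Lemma exists_inv_lt (R : realType) (e : R) : 0 < e ->
  exists N : nat, forall n, (N <= n)%N -> n.+1%:R^-1 < e.
Proof.
move=> e0; exists (Num.truncn e^-1) => n hn.
rewrite invf_plt ?posrE ?ltr0n //.
by apply: lt_le_trans (archimedean.Num.Theory.truncnS_gt _) _; rewrite ler_nat ltnS.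
Qed.

Section Riesz.
Variables (R : realType) (V : lmodType R[i]) (ip : V -> V -> R[i]).
Hypothesis hV : is_hilbert ip.
Variables (phi : V -> R[i]) (c : R).
Hypothesis linphi : linear phi.
Hypothesis phi_bound : forall x, complex.Re (phi x) <= c * ip_norm ip x.
Local Notation nrm := (ip_norm ip).
Local Notation sqn := (sqnorm ip).

Lemma normRe_phi_le x : `|complex.Re (phi x)| <= `|c| * nrm x.
Proof.
have le_c y : complex.Re (phi y) <= `|c| * nrm y.
  by apply: le_trans (phi_bound y) _; rewrite ler_wpM2r ?ip_norm_ge0 ?ler_norm.
by rewrite ler_norml le_c andbT lerNl -cReN -(linN linphi) -(ip_normN hV) le_c.
Qed.

Lemma normIm_phi_le x : `|complex.Im (phi x)| <= `|c| * nrm x.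
Proof.
have -> : complex.Im (phi x) = complex.Re (phi ((- 'i%C) *: x)).
  by rewrite (scalarZ linphi) !cE oppr0 mul0r sub0r mulN1r opprK.
apply: le_trans (normRe_phi_le _) _.
by rewrite (ip_normZ hV) !cE oppr0 expr0n add0r sqrrN expr1n sqrtr1 mul1r.
Qed.

Lemma phi_eq1_of_approx z :
  (forall e, 0 < e -> exists x, phi x = 1 /\ nrm (x - z) < e) -> phi z = 1.
Proof.
move=> approx.
have small (t : R) : (forall x, phi x = 1 -> `|t| <= `|c| * nrm (x - z)) -> t = 0.
  move=> ht; apply/eqP; rewrite -normr_le0; apply/ler_addgt0Pr => e e0.
  have c1 : 0 < `|c| + 1 by rewrite ltr_wpDl.
  have [x [hx hxz]] := approx (e / (`|c| + 1)) (divr_gt0 e0 c1).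
  apply: le_trans (ht x hx) _; rewrite add0r.
  apply: le_trans (_ : `|c| * (e / (`|c| + 1)) <= e).
    by rewrite ler_wpM2l // ltW.
  by rewrite mulrA ler_pdivrMr //; nra.
have phi_sub x : phi x = 1 -> phi (x - z) = 1 - phi z.
  by move=> hx; rewrite (linB linphi) hx.
apply: complexP; apply/esym/subr0_eq.
  by rewrite -cReN -cReD; apply: small => x hx; rewrite -(phi_sub x hx) normRe_phi_le.
by rewrite -cImN -cImD; apply: small => x hx; rewrite -(phi_sub x hx) normIm_phi_le.
Qed.

(* The point of least norm in the hyperplane [phi = 1] exists by completeness
   (minimizing sequences are Cauchy by the parallelogram law); it is orthogonal
   to [ker phi], which yields the representing vector. *)
Definition min_sqnorm := inf [set sqn x | x in [set x | phi x = 1]].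

Lemma min_sqnorm_le x : phi x = 1 -> min_sqnorm <= sqn x.
Proof.
move=> hx; apply: ge_inf; last by exists x.
by exists 0 => _ [y _ <-]; exact: sqnorm_ge0.
Qed.

Lemma sqnorm_sub_le x y : phi x = 1 -> phi y = 1 ->
  sqn (x - y) <= 2 * sqn x + 2 * sqn y - 4 * min_sqnorm.
Proof.
move=> hx hy.
have hmid : phi ((2^-1)%:C%C *: (x + y)) = 1.
  by rewrite (scalarZ linphi) (linD linphi) hx hy; apply: complexP; rewrite !cE /=; lra.
have := min_sqnorm_le hmid; rewrite (sqnormZ hV) !cE expr0n addr0.
have := parallelogram hV x y; lra.
Qed.

Lemma exists_min_sqnorm : (exists u, phi u = 1) ->
  exists z, phi z = 1 /\ sqn z <= min_sqnorm.
Proof.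
move=> [u0 hu0].
have minimizing n : exists x, phi x = 1 /\ sqn x < min_sqnorm + n.+1%:R^-1.
  have hinf : has_inf [set sqn x | x in [set x | phi x = 1]].
    by split; [exists (sqn u0), u0 | exists 0 => _ [y _ <-]; exact: sqnorm_ge0].
  have n0 : 0 < n.+1%:R^-1 :> R by rewrite invr_gt0.
  have [_ [x hx <-] lt_x] := inf_adherent n0 hinf.
  by exists x.
have [u hu] := choice minimizing.
have cauchy e : 0 < e -> exists N : nat, forall m n : nat,
    (N <= m)%N -> (N <= n)%N -> nrm (u m - u n) < e.
  move=> e0; have e4 : 0 < e ^+ 2 / 4 by rewrite divr_gt0 ?exprn_gt0.
  have [N hN] := exists_inv_lt e4.
  exists N => m n hm hn.
  rewrite -(@ltr_pXn2r _ 2) ?nnegrE ?ip_norm_ge0 ?(ltW e0) // (ip_norm_sqr hV).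
  have [[hm1 hm2] [hn1 hn2]] := (hu m, hu n).
  apply: le_lt_trans (sqnorm_sub_le hm1 hn1) _.
  have := hN _ hm; have := hN _ hn; move: hm2 hn2.
  by move: (m.+1%:R^-1) (n.+1%:R^-1) => a b; lra.
have [_ _ _ _ complete] := hV; have [z hz] := complete u cauchy.
exists z; split.
  apply: phi_eq1_of_approx => e /hz [N hN].
  by exists (u N); split; [case: (hu N) | exact: hN].
apply: (sqnorm_le_of_approx hV) => e /[dup] e0 /hz [N1 hN1].
have [N2 hN2] := exists_inv_lt e0.
exists (u (maxn N1 N2)); split; last exact/hN1/leq_maxl.
by case: (hu (maxn N1 N2)) => _ /ltW/le_trans; apply; rewrite lerD2l ltW ?hN2 ?leq_maxr.
Qed.

Lemma riesz_representation : exists z, forall x, phi x = ip x z.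
Proof.
have [phi0|/existsNP [x0 /eqP phix0]] := pselect (forall x, phi x = 0).
  by exists 0 => x; rewrite phi0 (ip0r hV).
have [z [phiz zmin]] : exists z, phi z = 1 /\ sqn z <= min_sqnorm.
  by apply: exists_min_sqnorm; exists ((phi x0)^-1 *: x0); rewrite (scalarZ linphi) mulVf.
have orth v : phi v = 0 -> ip v z = 0.
  move=> hv; apply: (ip_eq0_of_min hV) => a; apply: le_trans zmin (min_sqnorm_le _).
  by rewrite (linD linphi) (scalarZ linphi) hv mulr0 addr0.
have sqz0 : sqn z != 0.
  apply/eqP => /(sqnorm_eq0 hV) z0; move: phiz.
  by rewrite z0 (lin0 linphi) => /eqP; rewrite eq_sym oner_eq0.
exists ((sqn z)^-1%:C%C *: z) => x.
have := orth (x - phi x *: z).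
rewrite (linB linphi) (scalarZ linphi) phiz mulr1 subrr (ipBl hV) (ipZl hV) (ipxx hV).
move=> /(_ erefl) /subr0_eq hx.
by rewrite (ipZr hV) hx; apply: complexP; rewrite !cE /=; field.
Qed.

End Riesz.

(** * Bounded operators and adjoints *)

Lemma ler_of_sqr_le_mul (R : realType) (a b : R) :
  0 <= a -> 0 <= b -> a ^+ 2 <= b * a -> a <= b.
Proof.
move=> a0 b0 h; have [->|an0] := eqVneq a 0; first by [].
have ap : 0 < a by rewrite lt_def an0 a0.
by rewrite -(ler_pM2r ap) -expr2.
Qed.

Lemma bounded_op_bound (R : realType) (V W : lmodType R[i])
    (ipV : V -> V -> R[i]) (ipW : W -> W -> R[i]) (T : V -> W) : bounded_op ipV ipW T ->
  exists2 M, 0 <= M & forall x, ip_norm ipW (T x) <= M * ip_norm ipV x.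
Proof.
case=> _ [M hM]; exists (Num.max M 0) => [|x]; first by rewrite le_max lexx orbT.
by apply: le_trans (hM x) _; rewrite ler_wpM2r ?ip_norm_ge0 // le_max lexx.
Qed.

Lemma bounded_op_comp (R : realType) (U V W : lmodType R[i]) (ipU : U -> U -> R[i])
    (ipV : V -> V -> R[i]) (ipW : W -> W -> R[i]) (P : U -> V) (T : V -> W) :
  bounded_op ipU ipV P -> bounded_op ipV ipW T -> bounded_op ipU ipW (fun x => T (P x)).
Proof.
move=> hP hT; have [mP mP0 hmP] := bounded_op_bound hP.
have [mT mT0 hmT] := bounded_op_bound hT.
split; first by move=> a x y; rewrite hP.1 hT.1.
exists (mT * mP) => x; apply: le_trans (hmT _) _.
by rewrite -mulrA ler_wpM2l.
Qed.

Definition bounded_below (R : realType) (V W : lmodType R[i])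
    (ipV : V -> V -> R[i]) (ipW : W -> W -> R[i]) (T : V -> W) :=
  exists k : R, forall x, ip_norm ipV x <= k * ip_norm ipW (T x).

Section BoundedOperators.
Variables (R : realType) (V W : lmodType R[i]).
Variables (ipV : V -> V -> R[i]) (ipW : W -> W -> R[i]).
Hypotheses (hV : is_hilbert ipV) (hW : is_hilbert ipW).

Lemma bounded_opD (T1 T2 : V -> W) : bounded_op ipV ipW T1 -> bounded_op ipV ipW T2 ->
  bounded_op ipV ipW (fun x => T1 x + T2 x).
Proof.
move=> h1 h2; have [m1 _ hm1] := bounded_op_bound h1.
have [m2 _ hm2] := bounded_op_bound h2.
split; first by move=> a x y; rewrite h1.1 h2.1 scalerDr addrACA.
exists (m1 + m2) => x; apply: le_trans (ip_normD hW _ _) _.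
by rewrite mulrDl lerD.
Qed.

Lemma bounded_below_of_linv (T : V -> W) (Q : W -> V) :
  bounded_op ipW ipV Q -> (forall x, Q (T x) = x) -> bounded_below ipV ipW T.
Proof.
by move=> /bounded_op_bound[m _ hm] QT; exists m => x; have := hm (T x); rewrite QT.
Qed.

Lemma adjoint_linear (T : V -> W) (Ts : W -> V) : is_adjoint ipV ipW T Ts -> linear Ts.
Proof.
move=> hT a y y'; apply: (ip_inj_r hV) => x.
by rewrite -hT (ipDr hW) (ipZr hW) (ipDr hV) (ipZr hV) -!hT.
Qed.

Lemma bounded_op_adjoint (T : V -> W) (Ts : W -> V) :
  bounded_op ipV ipW T -> is_adjoint ipV ipW T Ts -> bounded_op ipW ipV Ts.
Proof.
move=> /bounded_op_bound[m m0 hm] hT; split; first exact: adjoint_linear hT.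
exists m => y; apply: ler_of_sqr_le_mul; rewrite ?mulr_ge0 ?ip_norm_ge0 //.
rewrite (ip_norm_sqr hV) /sqnorm -hT; apply: le_trans (Re_ip_le hW _ _) _.
by rewrite mulrAC ler_wpM2r ?ip_norm_ge0.
Qed.

Lemma bounded_below_adjoint (T : V -> W) (Ts : W -> V) (Tr : W -> V) :
  bounded_op ipW ipV Tr -> (forall y, T (Tr y) = y) -> is_adjoint ipV ipW T Ts ->
  bounded_below ipW ipV Ts.
Proof.
move=> /bounded_op_bound[m m0 hm] TTr hT; exists m => y.
apply: ler_of_sqr_le_mul; rewrite ?mulr_ge0 ?ip_norm_ge0 //.
rewrite (ip_norm_sqr hW) /sqnorm -[X in ipW X y](TTr y) hT.
apply: le_trans (Re_ip_le hV _ _) _.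
by rewrite mulrAC ler_wpM2r ?ip_norm_ge0.
Qed.

Lemma exists_adjoint (T : V -> W) : bounded_op ipV ipW T ->
  exists Ts : W -> V, is_adjoint ipV ipW T Ts.
Proof.
move=> hT; have [m _ hm] := bounded_op_bound hT.
have rep y : exists z, forall x, ipW (T x) y = ipV x z.
  apply: (riesz_representation hV (c := m * ip_norm ipW y)).
    by move=> a x x'; rewrite hT.1 (ipDl hW) (ipZl hW).
  move=> x; apply: le_trans (Re_ip_le hW _ _) _.
  by rewrite mulrAC ler_wpM2r ?ip_norm_ge0.
by have [Ts hTs] := choice rep; exists Ts => x y; exact: hTs.
Qed.

End BoundedOperators.

Lemma coercive_inverse_bounded (R : realType) (V : lmodType R[i])
    (ip : V -> V -> R[i]) (S Sinv : V -> V) (A : R) :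
  is_hilbert ip -> 0 < A -> linear S ->
  (forall x, A * ip_norm ip x ^+ 2 <= complex.Re (ip (S x) x)) ->
  cancel Sinv S -> cancel S Sinv -> bounded_op ip ip Sinv.
Proof.
move=> hV A0 linS coercive SSinv SinvS; split.
  by move=> a x y; apply: (can_inj SinvS); rewrite linS !SSinv.
have Ainv0 : 0 <= A^-1 by rewrite invr_ge0 ltW.
exists A^-1 => y; apply: ler_of_sqr_le_mul; rewrite ?mulr_ge0 ?ip_norm_ge0 //.
rewrite -mulrA ler_pdivlMl //; apply: le_trans (coercive _) _.
by rewrite SSinv (ipC hV) cReJ mulrC Re_ip_le.
Qed.

(** * Strong measurability and integrability *)

Section StrongMeasurability.
Variables (R : realType) (d : measure_display) (Omega : measurableType d).
Variables (K : Omega -> lmodType R[i]) (ipK : forall w, K w -> K w -> R[i]).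
Hypothesis hK : forall w, is_hilbert (@ipK w).

Lemma dinj_id w (v : K w) : dinj v w = v.
Proof. by rewrite /dinj; case: pselect => // e; rewrite (Prop_irrelevance e erefl). Qed.

Lemma dinj_neq w w' (v : K w) : w <> w' -> dinj v w' = 0.
Proof. by rewrite /dinj; case: pselect. Qed.

Lemma dinj0 w : dinj (0 : K w) = (fun w' => 0).
Proof.
apply: functional_extensionality_dep => w'.
by rewrite /dinj; case: pselect => // e; case: w' / e.
Qed.

Lemma dnorm2_dinj w (v : K w) : dnorm2 ipK (dinj v) = (ip_norm (@ipK w) v ^+ 2)%:E.
Proof.
rewrite /dnorm2.
have -> : \esum_(w' in [set: Omega]) (ip_norm (@ipK w') (dinj v w') ^+ 2)%:E
    = \esum_(w' in [set: Omega]) (if w' \in [set w]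
        then (ip_norm (@ipK w') (dinj v w') ^+ 2)%:E else 0%E).
  apply: eq_esum => w' _; case: ifPn => // /negP hw.
  by rewrite dinj_neq ?(ip_norm0 (hK w')) ?expr0n // => e; apply: hw; rewrite inE e.
by rewrite -esum_mkcond esum_set1 ?dinj_id // lee_fin sqr_ge0.
Qed.

Lemma dsum_set_dinj w (v : K w) : dsum_set ipK (dinj v).
Proof. by rewrite /dsum_set /= dnorm2_dinj ltry. Qed.

Lemma sqr_ip_norm_le_dnorm2 (x : forall w, K w) w :
  ((ip_norm (@ipK w) (x w) ^+ 2)%:E <= dnorm2 ipK x)%E.
Proof.
rewrite /dnorm2; apply: esum_ge; exists [set w]; last by rewrite fsbig_set1.
by split; [exact: finite_set1 | by []].
Qed.

Definition supp (F : forall w, K w) : set Omega := [set w | F w != 0].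

Definition hereditarily_measurable (Z : set Omega) := forall E, E `<=` Z -> measurable E.

(* Each [dinj (F w)] with [w] in the support lies in the open half-space
   [Re <y w, F w> > |F w|^2 / 2], which contains no other [dinj (F w')]; the
   union over [w \in E] has preimage [E], so with these definitions every subset
   of the support of a strongly measurable [F] is measurable. *)
Definition halfspaces_near (E : set Omega) (F : forall w, K w) : set (forall w, K w) :=
  [set y | dsum_set ipK y /\ exists2 w, E w &
     sqnorm (@ipK w) (F w) / 2 < complex.Re (ipK (y w) (F w))].

Lemma dsum_open_halfspaces_near E F : dsum_open ipK (halfspaces_near E F).
Proof.
split; first by move=> y [].
move=> x [_ [w Ew hw]].
set nf := ip_norm (@ipK w) (F w).
set del := complex.Re (ipK (x w) (F w)) - sqnorm (@ipK w) (F w) / 2.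
have del0 : 0 < del by rewrite /del subr_gt0.
have nf0 : 0 <= nf by exact: ip_norm_ge0.
have nf1 : 0 < nf + 1 by rewrite ltr_wpDl.
exists (del / (nf + 1)); split; first by rewrite divr_gt0.
move=> y ys hy; split => //; exists w => //.
have hyx : ip_norm (@ipK w) (y w - x w) < del / (nf + 1).
  rewrite -(@ltr_pXn2r _ 2) ?nnegrE ?ip_norm_ge0 ?divr_ge0 ?ltW // -lte_fin.
  exact: le_lt_trans (sqr_ip_norm_le_dnorm2 (fun w => y w - x w) w) hy.
have close : ip_norm (@ipK w) (y w - x w) * nf < del.
  apply: le_lt_trans (_ : del / (nf + 1) * nf < del).
    by rewrite ler_wpM2r // ltW.
  by rewrite mulrAC ltr_pdivrMr // ltr_pM2l // ltrDl.
have := normRe_ip_le (hK w) (y w - x w) (F w).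
rewrite (ipBl (hK w)) cReD cReN ler_norml => /andP[+ _].
by move: close; rewrite /del /nf; lra.
Qed.

Lemma strongly_measurable_supp F :
  strongly_measurable ipK F -> hereditarily_measurable (supp F).
Proof.
move=> hF E hE.
have hB : dsum_borel ipK (halfspaces_near E F).
  by move=> A [_ GA]; apply: GA; exact: dsum_open_halfspaces_near.
suff <- : [set w | halfspaces_near E F (dinj (F w))] = E by exact: hF.
apply/seteqP; split=> w.
  move=> [_ [w' Ew' h]]; have [->//|ne] := pselect (w = w').
  move: h; rewrite dinj_neq // (ip0l (hK w')) /=.
  by have := sqnorm_ge0 (hK w') (F w'); lra.
move=> Ew; split; first exact: dsum_set_dinj.
exists w => //; rewrite dinj_id -/(sqnorm _ (F w)).
have : sqnorm (@ipK w) (F w) != 0.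
  by apply: contraNneq (hE w Ew) => /(sqnorm_eq0 (hK w)) ->; rewrite /supp /= eqxx.
by rewrite neq_lt => /orP[]; have := sqnorm_ge0 (hK w) (F w); lra.
Qed.

Lemma hereditarily_measurableU Z1 Z2 : hereditarily_measurable Z1 ->
  hereditarily_measurable Z2 -> hereditarily_measurable (Z1 `|` Z2).
Proof.
move=> h1 h2 E hE; rewrite -(setIidl hE) setIUr.
by apply: measurableU; [apply: h1 | apply: h2]; exact: subIsetr.
Qed.

Lemma measurable_eq_off (Z P : set Omega) (b : Prop) : hereditarily_measurable Z ->
  (forall w, ~ Z w -> (P w <-> b)) -> measurable P.
Proof.
move=> hZ hP; have [hb|hb] := pselect b.
  have -> : P = (P `&` Z) `|` ~` Z.
    apply/seteqP; split=> w; first by have [|] := pselect (Z w); [left|right].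
    by case=> [[]//|Zw]; apply/(hP _ Zw).
  by apply: measurableU; [apply: hZ; exact: subIsetr | apply/measurableC/hZ].
have -> : P = P `&` Z.
  apply/seteqP; split=> w; last by case.
  by move=> Pw; split => //; apply/not_notP => Zw; apply/hb/(hP _ Zw).
by apply: hZ; exact: subIsetr.
Qed.

Lemma measurable_fun_eq_off (Z : set Omega) (d' : measure_display)
    (T : measurableType d') (g : Omega -> T) (c : T) :
  hereditarily_measurable Z -> (forall w, ~ Z w -> g w = c) -> measurable_fun setT g.
Proof.
move=> hZ hg _ B _; rewrite setTI.
by apply: (measurable_eq_off (b := B c) hZ) => w Zw; rewrite /preimage /= hg.
Qed.

Lemma strongly_measurableD F G : strongly_measurable ipK F ->
  strongly_measurable ipK G -> strongly_measurable ipK (fun w => F w + G w).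
Proof.
move=> hF hG B _; have hZ := hereditarily_measurableU
  (strongly_measurable_supp hF) (strongly_measurable_supp hG).
apply: (measurable_eq_off (b := B (fun w' => 0)) hZ) => w hw.
have [F0 G0] : F w = 0 /\ G w = 0.
  by split; apply/eqP/negPn/negP => h; apply: hw; [left|right].
by rewrite /= F0 G0 addr0 dinj0.
Qed.

End StrongMeasurability.

Section Integrals.
Variables (R : realType) (d : measure_display) (Omega : measurableType d).
Variable mu : {measure set Omega -> \bar R}.
Variables (K : Omega -> lmodType R[i]) (ipK : forall w, K w -> K w -> R[i]).
Hypothesis hK : forall w, is_hilbert (@ipK w).
Implicit Types f g : Omega -> R.

Definition rintegrable f := mu.-integrable setT (EFin \o f).

Lemma integral_EFin f : rintegrable f -> (\int[mu]_w (f w)%:E = (\int[mu]_w f w)%:E)%E.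
Proof. by move=> hf; rewrite /Rintegral fineK // integrable_fin_num. Qed.

Lemma rintegrableD f g : rintegrable f -> rintegrable g -> rintegrable (fun w => f w + g w).
Proof.
by move=> hf hg; apply: eq_integrable (integrableD measurableT hf hg).
Qed.

Lemma rintegrableZ k f : rintegrable f -> rintegrable (fun w => k * f w).
Proof.
by move=> hf; apply: eq_integrable (integrableZl measurableT k hf).
Qed.

Lemma rintegrable_le f g : measurable_fun setT f -> rintegrable g ->
  (forall w, `|f w| <= g w) -> rintegrable f.
Proof.
move=> mf hg hfg; apply: le_integrable hg => //; first exact/measurable_EFinP.
by move=> w _ /=; rewrite lee_fin (le_trans (hfg w)) ?ler_norm.
Qed.

Lemma rintegrable_sqnorm (F : forall w, K w) : strongly_measurable ipK F ->
  (\int[mu]_w (ip_norm (@ipK w) (F w) ^+ 2)%:E < +oo)%E ->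
  rintegrable (fun w => sqnorm (@ipK w) (F w)).
Proof.
move=> hF hfin; apply/integrableP; split.
  apply: (measurable_fun_eq_off (c := 0%:E) (strongly_measurable_supp hK hF)) => w hw /=.
  have -> : F w = 0 by apply/eqP/negPn/negP.
  by rewrite /= /sqnorm (ip0l (hK w)).
apply: le_lt_trans hfin; rewrite le_eqVlt; apply/orP; left; apply/eqP.
apply: eq_integral => w _.
by rewrite /= ger0_norm ?(sqnorm_ge0 (hK w)) ?(ip_norm_sqr (hK w)).
Qed.

(* [|<F, G>| <= |F|^2 + |G|^2] pointwise, and the integrand vanishes off the
   supports, which makes it measurable. *)
Lemma cintegrable_ip (F G : forall w, K w) :
  strongly_measurable ipK F -> strongly_measurable ipK G ->
  (\int[mu]_w (ip_norm (@ipK w) (F w) ^+ 2)%:E < +oo)%E ->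
  (\int[mu]_w (ip_norm (@ipK w) (G w) ^+ 2)%:E < +oo)%E ->
  cintegrable mu (fun w => ipK (F w) (G w)).
Proof.
move=> hF hG iF iG.
have hZ := hereditarily_measurableU (strongly_measurable_supp hK hF)
  (strongly_measurable_supp hK hG).
have iFG := rintegrableD (rintegrable_sqnorm hF iF) (rintegrable_sqnorm hG iG).
have meas (part : R[i] -> R) :
    part 0 = 0 -> measurable_fun setT (fun w => part (ipK (F w) (G w))).
  move=> part0; apply: (measurable_fun_eq_off (c := 0 : R) hZ) => w hw.
  have -> : F w = 0 by apply/eqP/negPn/negP => h; apply: hw; left.
  by rewrite (ip0l (hK w)).
have mean w : ip_norm (@ipK w) (F w) * ip_norm (@ipK w) (G w)
    <= sqnorm (@ipK w) (F w) + sqnorm (@ipK w) (G w).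
  apply: le_trans (ip_norm_mul_le (hK w) _ _) _.
  by have := sqnorm_ge0 (hK w) (F w); have := sqnorm_ge0 (hK w) (G w); lra.
split; apply: (rintegrable_le (meas _ _) iFG) => // w.
  exact: le_trans (normRe_ip_le (hK w) _ _) (mean w).
exact: le_trans (normIm_ip_le (hK w) _ _) (mean w).
Qed.

Lemma cintegralD (f g : Omega -> R[i]) : cintegrable mu f -> cintegrable mu g ->
  cintegral mu (fun w => f w + g w) = cintegral mu f + cintegral mu g.
Proof.
move=> [f1 f2] [g1 g2]; apply: complexP.
  by rewrite cReD /= -RintegralD //; apply: eq_Rintegral => w _; rewrite cReD.
by rewrite cImD /= -RintegralD //; apply: eq_Rintegral => w _; rewrite cImD.
Qed.

End Integrals.

(** * Continuous g-Bessel families and g-frames *)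

Section Frames.
Variables (R : realType) (d : measure_display) (Omega : measurableType d).
Variable mu : {measure set Omega -> \bar R}.
Variables (K : Omega -> lmodType R[i]) (ipK : forall w, K w -> K w -> R[i]).
Hypothesis hK : forall w, is_hilbert (@ipK w).
Variables (H : lmodType R[i]) (ip : H -> H -> R[i]).
Hypothesis hH : is_hilbert ip.
Implicit Types (L T : forall w, H -> K w) (P : H -> H).

Local Notation energy L f := (\int[mu]_w (ip_norm (@ipK w) (L w f) ^+ 2)%:E)%E.

Definition cgbessel L : Prop :=
  [/\ forall w, bounded_op ip (@ipK w) (L w),
      forall f, strongly_measurable ipK (fun w => L w f) &
      exists B : R, forall f, (energy L f <= (B * ip_norm ip f ^+ 2)%:E)%E].

Lemma cgframe_bessel L : cgframe mu ipK ip L -> cgbessel L.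
Proof. by case=> hb hm [A [B [_ _ hAB]]]; split => //; exists B => f; case: (hAB f). Qed.

Lemma cgbessel_energy_fin L : cgbessel L -> forall f, (energy L f < +oo)%E.
Proof. by case=> _ _ [B hB] f; apply: le_lt_trans (hB f) _; rewrite ltry. Qed.

Lemma cgbessel_energyE L f : cgbessel L ->
  energy L f = (\int[mu]_w sqnorm (@ipK w) (L w f))%:E.
Proof.
move=> hL; have [_ hm _] := hL.
rewrite -integral_EFin; last exact: rintegrable_sqnorm (hm f) (cgbessel_energy_fin hL f).
by apply: eq_integral => w _; rewrite (ip_norm_sqr (hK w)).
Qed.

Lemma cgbessel_cintegrable L T : cgbessel L -> cgbessel T ->
  forall f g, cintegrable mu (fun w => ipK (L w f) (T w g)).
Proof.
move=> hL hT f g; have [_ hmL _] := hL; have [_ hmT _] := hT.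
by apply: (cintegrable_ip hK (hmL f) (hmT g)); exact: cgbessel_energy_fin.
Qed.

Lemma cgframeI L (A : R) : cgbessel L -> 0 < A ->
  (forall f, ((A * ip_norm ip f ^+ 2)%:E <= energy L f)%E) -> cgframe mu ipK ip L.
Proof.
case=> hb hm [B hB] A0 hA; split => //.
exists A, (Num.max A B); split; rewrite ?le_max ?lexx // => f; split => //.
by apply: le_trans (hB f) _; rewrite lee_fin ler_wpM2r ?sqr_ge0 // le_max lexx orbT.
Qed.

Lemma cgbessel_comp L P : cgbessel L -> bounded_op ip ip P ->
  cgbessel (fun w f => L w (P f)).
Proof.
case=> hb hm [B hB] hP; have [m m0 hmP] := bounded_op_bound hP.
split => [w|f|]; [exact: bounded_op_comp hP (hb w) | exact: hm |].
exists (Num.max B 0 * m ^+ 2) => f; apply: le_trans (hB (P f)) _; rewrite lee_fin.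
apply: le_trans (_ : _ <= Num.max B 0 * ip_norm ip (P f) ^+ 2) _.
  by rewrite ler_wpM2r ?sqr_ge0 // le_max lexx.
rewrite -mulrA -exprMn ler_wpM2l ?le_max ?lexx ?orbT //.
by rewrite lerXn2r ?nnegrE ?mulr_ge0 ?ip_norm_ge0.
Qed.

Lemma cgframe_comp L P : cgframe mu ipK ip L -> bounded_op ip ip P ->
  bounded_below ip ip P -> cgframe mu ipK ip (fun w f => L w (P f)).
Proof.
move=> hL hP [k hk]; have [_ _ [A [? [A0 _ hAB]]]] := hL.
set k' := Num.max k 1; have k'0 : 0 < k' by rewrite lt_max ltr01 orbT.
apply: (cgframeI (A := A / k' ^+ 2)); rewrite ?divr_gt0 ?exprn_gt0 //.
  exact: cgbessel_comp (cgframe_bessel hL) hP.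
move=> f; apply: le_trans (hAB (P f)).1; rewrite lee_fin.
have hf : ip_norm ip f ^+ 2 <= (k' * ip_norm ip (P f)) ^+ 2.
  rewrite lerXn2r ?nnegrE ?mulr_ge0 ?ip_norm_ge0 ?(ltW k'0) //.
  by apply: le_trans (hk f) _; rewrite ler_wpM2r ?ip_norm_ge0 // le_max lexx.
rewrite mulrAC ler_pdivrMr ?exprn_gt0 // -mulrA ler_wpM2l ?(ltW A0) //.
by rewrite mulrC -exprMn.
Qed.

Lemma strongly_disjoint_comp L T P Q : strongly_disjoint mu ipK L T ->
  strongly_disjoint mu ipK (fun w f => L w (P f)) (fun w f => T w (Q f)).
Proof. by move=> hLT f g; exact: hLT. Qed.

(* The cross term integrates to [2 Re <T_L^* f, T_T^* f>], which strong
   disjointness makes vanish. *)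
Lemma energy_add_disjoint L T f : cgbessel L -> cgbessel T ->
  strongly_disjoint mu ipK L T ->
  energy (fun w f => L w f + T w f) f = (energy L f + energy T f)%E.
Proof.
move=> hL hT hLT; have [[_ hmL _] [_ hmT _]] := (hL, hT).
set u := fun w => sqnorm (@ipK w) (L w f).
set v := fun w => sqnorm (@ipK w) (T w f).
set c := fun w => complex.Re (ipK (L w f) (T w f)).
have iu : rintegrable mu u := rintegrable_sqnorm hK (hmL f) (cgbessel_energy_fin hL f).
have iv : rintegrable mu v := rintegrable_sqnorm hK (hmT f) (cgbessel_energy_fin hT f).
have ic : rintegrable mu c by case: (cgbessel_cintegrable hL hT f f).
have c0 : \int[mu]_w c w = 0.
  by have := hLT f f; rewrite /khat_ip /cintegral => /(congr1 (@complex.Re R)).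
rewrite (eq_integral (fun w => (u w + v w + 2 * c w)%:E)); last first.
  by move=> w _; rewrite (ip_norm_sqr (hK w)) (sqnormD (hK w)).
have iuv : rintegrable mu (fun w => u w + v w) := rintegrableD iu iv.
have i2c : rintegrable mu (fun w => 2 * c w) := rintegrableZ 2 ic.
rewrite integral_EFin; last exact: rintegrableD iuv i2c.
rewrite (RintegralD measurableT iuv i2c) (RintegralD measurableT iu iv).
rewrite (RintegralZl 2 measurableT ic).
by rewrite c0 mulr0 addr0 EFinD !cgbessel_energyE.
Qed.

Lemma cgbesselD L T : cgbessel L -> cgbessel T -> strongly_disjoint mu ipK L T ->
  cgbessel (fun w f => L w f + T w f).
Proof.
move=> hL hT hLT; have [[hbL hmL [BL hBL]] [hbT hmT [BT hBT]]] := (hL, hT).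
split => [w|f|]; first exact: (bounded_opD (hK w) (hbL w) (hbT w)).
  exact: (strongly_measurableD hK (hmL f) (hmT f)).
exists (BL + BT) => f; rewrite energy_add_disjoint // mulrDl EFinD.
exact: leeD (hBL f) (hBT f).
Qed.

Lemma cgframeD L T : cgframe mu ipK ip L -> cgbessel T ->
  strongly_disjoint mu ipK L T -> cgframe mu ipK ip (fun w f => L w f + T w f).
Proof.
move=> hL hT hLT; have [_ _ [A [? [A0 _ hAB]]]] := hL.
have hL' := cgframe_bessel hL.
apply: (cgframeI (cgbesselD hL' hT hLT) A0) => f.
rewrite energy_add_disjoint //; apply: le_trans (hAB f).1 _; rewrite leeDl //.
by apply: integral_ge0 => w _; rewrite lee_fin sqr_ge0.
Qed.

Lemma frame_operator_ip L S : cgframe mu ipK ip L -> frame_operator mu ipK ip L S ->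
  forall a b, ip (S a) b = cintegral mu (fun w => ipK (L w a) (L w b)).
Proof.
case=> hb _ _ [_ hS] a b.
pose Ls w := projT1 (cid (exists_adjoint hH (hK w) (hb w))).
have hLs w : is_adjoint ip (@ipK w) (L w) (Ls w) := projT2 (cid _).
by rewrite (hS Ls hLs); congr cintegral; apply/funext => w; rewrite hLs.
Qed.

Lemma frame_operator_coercive L S : cgframe mu ipK ip L -> frame_operator mu ipK ip L S ->
  exists2 A, 0 < A & forall a, A * ip_norm ip a ^+ 2 <= complex.Re (ip (S a) a).
Proof.
move=> hL hS; have [_ _ [A [? [A0 _ hAB]]]] := hL; exists A => // a.
have := (hAB a).1; rewrite (cgbessel_energyE _ (cgframe_bessel hL)) lee_fin.
rewrite (frame_operator_ip hL hS) /cintegral /=.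
by under eq_Rintegral do rewrite -/(sqnorm _ _).
Qed.

Lemma frame_operator_inv_bounded L S Sinv :
  cgframe mu ipK ip L -> frame_operator mu ipK ip L S ->
  cancel Sinv S -> cancel S Sinv -> bounded_op ip ip Sinv.
Proof.
move=> hL hS SSinv SinvS; have [A A0 hA] := frame_operator_coercive hL hS.
exact: coercive_inverse_bounded hH A0 hS.1.1 hA SSinv SinvS.
Qed.

Lemma cg_dualI T F : cgframe mu ipK ip T -> cgframe mu ipK ip F ->
  (forall f g, ip f g = cintegral mu (fun w => ipK (T w f) (F w g))) ->
  cg_dual mu ipK ip T F.
Proof.
move=> hT hF rep; split => // Ts hTs f g.
have -> : (fun w => ip f (Ts w (F w g))) = (fun w => ipK (T w f) (F w g)).
  by apply/funext => w; rewrite hTs.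
split; last exact: rep.
exact: cgbessel_cintegrable (cgframe_bessel hT) (cgframe_bessel hF) f g.
Qed.

End Frames.

Unset Implicit Arguments.
Set Strict Implicit.

Theorem proposition2p11
  (R : realType) (d : measure_display) (Omega : measurableType d)
  (mu : {measure set Omega -> \bar R})
  (H : lmodType R[i]) (ip : H -> H -> R[i])
  (K : Omega -> lmodType R[i]) (ipK : forall w, K w -> K w -> R[i])
  (hH : is_hilbert ip) (hK : forall w, is_hilbert (@ipK w))
  (Lam Th : forall w, H -> K w)
  (hLam : cgframe mu ipK ip Lam) (hTh : cgframe mu ipK ip Th)
  (hdisj : strongly_disjoint mu ipK Lam Th)
  (S Sinv : H -> H) (hS : frame_operator mu ipK ip Lam S)
  (hSinv1 : forall f, S (Sinv f) = f) (hSinv2 : forall f, Sinv (S f) = f)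
  (L1 L2 L1s L2s L1dag : H -> H)
  (hL1 : bounded_op ip ip L1) (hL2 : bounded_op ip ip L2)
  (hL1s : is_adjoint ip ip L1 L1s) (hL2s : is_adjoint ip ip L2 L2s)
  (hL1surj : forall g, exists f, L1 f = g)
  (hL1dag : bounded_op ip ip L1dag) (hL1L1dag : forall f, L1 (L1dag f) = f) :
  cg_dual mu ipK ip (fun w f => Lam w (Sinv (L1dag f))) (fun w f => Lam w (L1s f)) /\
  cg_dual mu ipK ip (fun w f => Lam w (Sinv (L1dag f)))
                    (fun w f => Lam w (L1s f) + Th w (L2s f)).
Proof.
pose M f := Sinv (L1dag f).
have hM : bounded_op ip ip M.
  exact: bounded_op_comp hL1dag (frame_operator_inv_bounded hK hH hLam hS hSinv1 hSinv2).
have hM_below : bounded_below ip ip M.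
  apply: (bounded_below_of_linv (Q := fun f => L1 (S f))) => [|f].
    exact: bounded_op_comp hS.1 hL1.
  by rewrite /M hSinv1 hL1L1dag.
have hL1s_b := bounded_op_adjoint hH hH hL1 hL1s.
have hDual := cgframe_comp hLam hM hM_below.
have hF1 := cgframe_comp hLam hL1s_b (bounded_below_adjoint hH hH hL1dag hL1L1dag hL1s).
have hTh2 := cgbessel_comp (cgframe_bessel hTh) (bounded_op_adjoint hH hH hL2 hL2s).
have hF2 := cgframeD hK hF1 hTh2 (strongly_disjoint_comp _ _ hdisj).
have reproducing f g : ip f g = cintegral mu (fun w => ipK w (Lam w (M f)) (Lam w (L1s g))).
  by rewrite -(frame_operator_ip hK hH hLam hS) /M hSinv1 -hL1s hL1L1dag.
split; apply: cg_dualI => // f g.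
under eq_fun do rewrite (ipDr (hK _)).
rewrite cintegralD; last 2 first.
- exact: (cgbessel_cintegrable hK (cgframe_bessel hLam) (cgframe_bessel hLam)).
- exact: (cgbessel_cintegrable hK (cgframe_bessel hLam) (cgframe_bessel hTh)).
have := hdisj (M f) (L2s g); rewrite /khat_ip => ->.
by rewrite -reproducing addr0.
Qed.
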